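(* Let $\phi:H\to G$ be a homomorphism of graphs, where $G$ is a finite graph. Then the induced functor of free categories $\mathcal{F}(\phi):\mathcal{F}(H)\to\mathcal{F}(G)$ is finitary if and only if $H$ is finite.
   Context: A graph is a directed multigraph: a set of nodes and a set of edges, each edge having a source node and a target node; it is finite if it has finitely many nodes and edges. A homomorphism of graphs maps nodes to nodes and edges to edges preserving source and target. $\mathcal{F}(G)$ denotes the free category generated by $G$: objects are nodes of $G$ and arrows are finite paths (including empty paths as identities), composed by concatenation; $\mathcal{F}(\phi)$ acts by $\phi$ on nodes and edgewise on paths. A functor $p:\mathcal{D}\to\mathcal{C}$ is finitary if for every object $A$ of $\mathcal{C}$ the set $p^{-1}(A)$ of objects of $\mathcal{D}$ mapped to $A$ is finite, and for every arrow $w$ of $\mathcal{C}$ the set $p^{-1}(w)$ of arrows of $\mathcal{D}$ mapped to $w$ is finite. *)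

From Stdlib Require Import List.
Import ListNotations.

Record graph : Type := Graph {
  node : Type;
  edge : Type;
  src : edge -> node;
  tgt : edge -> node
}.

Definition finite_pred {T : Type} (P : T -> Prop) : Prop :=
  exists l : list T, forall x, P x -> In x l.

Definition finite_type (T : Type) : Prop := finite_pred (fun _ : T => True).

Definition finite_graph (G : graph) : Prop :=
  finite_type (node G) /\ finite_type (edge G).

Record graph_hom (H G : graph) : Type := GraphHom {
  hom_node : node H -> node G;
  hom_edge : edge H -> edge G;
  hom_src : forall e, hom_node (src H e) = src G (hom_edge e);
  hom_tgt : forall e, hom_node (tgt H e) = tgt G (hom_edge e)
}.
Arguments hom_node {H G}.
Arguments hom_edge {H G}.

(* Arrows of the free category F(G): an arrow a -> b is a finite path,
   i.e. a list of composable edges [e1; ...; en] with src e1 = a,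
   tgt ei = src e(i+1), tgt en = b (the empty list is the identity at a = b).
   An arrow is represented by the triple (a, es, b) satisfying is_path. *)
Fixpoint is_path (G : graph) (a : node G) (es : list (edge G)) (b : node G)
  : Prop :=
  match es with
  | [] => a = b
  | e :: es' => src G e = a /\ is_path G (tgt G e) es' b
  end.

Definition free_map_arrow {H G : graph} (phi : graph_hom H G)
  (w : node H * list (edge H) * node H) : node G * list (edge G) * node G :=
  let '(a, es, b) := w in (hom_node phi a, map (hom_edge phi) es, hom_node phi b).

Definition free_functor_finitary {H G : graph} (phi : graph_hom H G) : Prop :=
  (forall A : node G, finite_pred (fun v : node H => hom_node phi v = A)) /\
  (forall (a : node G) (es : list (edge G)) (b : node G),
     is_path G a es b ->
     finite_pred (fun w : node H * list (edge H) * node H =>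
        let '(a', es', b') := w in
        is_path H a' es' b' /\ free_map_arrow phi w = (a, es, b))).

(* A node or edge of H lies in the fibre of F(phi) over its image (as an object, resp. as a
   one-edge path), so finitely many fibres over the finite graph G cover H. Conversely, if H
   is finite then every fibre over a path with n edges consists of triples (a, es, b) with
   es a list of n edges of H, of which there are finitely many. *)
From Stdlib Require Import List.
Import ListNotations.

Lemma finite_pred_sub {T : Type} (P Q : T -> Prop) :
  (forall x, Q x -> P x) -> finite_pred P -> finite_pred Q.
Proof. intros QP [l Hl]. exists l. auto. Qed.

Lemma finite_type_pred {T : Type} (P : T -> Prop) : finite_type T -> finite_pred P.
Proof. apply finite_pred_sub. trivial. Qed.

Lemma finite_pred_image {A B : Type} (f : A -> B) (P : A -> Prop) :
  finite_pred P -> finite_pred (fun y => exists x, P x /\ f x = y).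
Proof.
  intros [l Hl]. exists (map f l). intros y (x & Px & <-). apply in_map. auto.
Qed.

Lemma finite_pred_prod {A B : Type} (P : A -> Prop) (Q : B -> Prop) :
  finite_pred P -> finite_pred Q -> finite_pred (fun p => P (fst p) /\ Q (snd p)).
Proof.
  intros [l Hl] [m Hm]. exists (list_prod l m).
  intros [x y] [Px Qy]. apply in_prod; auto.
Qed.

Lemma finite_pred_bigcup {A B : Type} (P : A -> Prop) (Q : A -> B -> Prop) :
  finite_pred P -> (forall a, finite_pred (Q a)) ->
  finite_pred (fun x => exists a, P a /\ Q a x).
Proof.
  intros [l Hl] HQ.
  enough (Hcup : finite_pred (fun x => exists a, In a l /\ Q a x)).
  { revert Hcup. apply finite_pred_sub. intros x (a & Pa & Qx). eauto. }
  clear Hl. induction l as [|a l [L HL]].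
  - exists []. intros x (a & [] & _).
  - destruct (HQ a) as [La HLa]. exists (La ++ L).
    intros x (a' & [<- | Ha'] & Qx); apply in_or_app; eauto.
Qed.

Lemma finite_lists_of_length {T : Type} (n : nat) :
  finite_type T -> finite_pred (fun l : list T => length l = n).
Proof.
  intros HT. induction n as [|n IH].
  - exists [[]]. intros [|x l] Hl; [now left | discriminate].
  - pose proof (finite_pred_image (fun p => fst p :: snd p) _
                  (finite_pred_prod _ _ (finite_type_pred (fun _ => True) HT) IH)) as Hcons.
    revert Hcons. apply finite_pred_sub. intros [|x l] Hl; [discriminate|].
    exists (x, l). simpl. auto.
Qed.

Lemma finite_pred_pcancel {A B : Type} (g : A -> B) (h : B -> option A) (P : B -> Prop) :
  (forall x, h (g x) = Some x) -> finite_pred P ->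
  finite_pred (fun x => P (g x)).
Proof.
  intros gK [l Hl]. exists (flat_map (fun y => match h y with Some x => [x] | None => [] end) l).
  intros x Px. apply in_flat_map. exists (g x). rewrite gK. simpl. auto.
Qed.

Lemma is_path_edge (K : graph) (e : edge K) : is_path K (src K e) [e] (tgt K e).
Proof. simpl. auto. Qed.

Section FreeFunctor.

Variables (H G : graph) (phi : graph_hom H G).

Lemma free_map_arrow_edge (e : edge H) :
  free_map_arrow phi (src H e, [e], tgt H e)
  = (src G (hom_edge phi e), [hom_edge phi e], tgt G (hom_edge phi e)).
Proof. simpl. now rewrite hom_src, hom_tgt. Qed.

Lemma finitary_of_finite_graph : finite_graph H -> free_functor_finitary phi.
Proof.
  intros [HN HE]. split.
  - intros A. now apply finite_type_pred.
  - intros a es b _.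
    pose proof (finite_pred_prod _ _
                  (finite_pred_prod _ _ (finite_type_pred (fun _ => True) HN)
                     (finite_lists_of_length (length es) HE))
                  (finite_type_pred (fun _ => True) HN)) as Htriples.
    revert Htriples. apply finite_pred_sub.
    intros [[a' es'] b'] [_ Hmap]. injection Hmap as _ <- _.
    simpl. now rewrite length_map.
Qed.

Lemma finite_nodes_of_finitary :
  free_functor_finitary phi -> finite_type (node G) -> finite_type (node H).
Proof.
  intros [Fnode _] HN.
  pose proof (finite_pred_bigcup _ _ HN Fnode) as Hcover.
  revert Hcover. apply finite_pred_sub. intros v _. eauto.
Qed.

Lemma finite_edges_of_finitary :
  free_functor_finitary phi -> finite_type (edge G) -> finite_type (edge H).
Proof.
  intros [_ Farrow] HE.
  pose proof (finite_pred_bigcup _ _ HE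
                (fun e => Farrow _ _ _ (is_path_edge G e))) as Hcover.
  pose proof (finite_pred_pcancel (fun e => (src H e, [e], tgt H e))
                (fun w => match snd (fst w) with [e] => Some e | _ => None end)
                _ (fun e => eq_refl) Hcover) as Hedges.
  revert Hedges. apply finite_pred_sub. intros e _.
  exists (hom_edge phi e). split; [exact I|].
  split; [apply is_path_edge | apply free_map_arrow_edge].
Qed.

End FreeFunctor.

Theorem mainTheorem2 (H G : graph) (phi : graph_hom H G) :
  finite_graph G ->
  (free_functor_finitary phi <-> finite_graph H).
Proof.
  intros [GN GE]. split.
  - intros Fphi. split.
    + exact (finite_nodes_of_finitary H G phi Fphi GN).
    + exact (finite_edges_of_finitary H G phi Fphi GE).
  - apply finitary_of_finite_graph.
Qed.
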